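(* Let $(G_x)$ be the coclass family defined by $\eta\in H^3(P,T)$, $x\in\mathbb{N}_0$, and let $A = C_{L,x}(\gamma)\times O$ and $B$ be objects of $\mathcal{A}_p(G_x)$, where $L\in\mathcal{L}_\eta$, $\gamma\in Z^1(L,M_x)$, $O\in\mathcal{O}_x(L)$. Let $g=(w,m)$ and $g'=(w,m')$ be two elements of $G_x$ that each induce a morphism in $\mathrm{Hom}(A,B)$. Then $g$ and $g'$ induce the same morphism in $\mathrm{Hom}(A,B)$ if and only if $m-m'\in C_{M_x}(L)^w$, where $C_{M_x}(L)=\{n\in M_x\mid [n,l]=0 \text{ for all } l\in L\}$.
   Context: Conventions: normalised cocycles $Z^n$, coboundaries $B^n$, cohomology $H^n$ for right modules written additively; $\mathrm{Ext}(\tau)$ is $G\times M$ with $(g,m)(h,n)=(gh,m^h+n+\tau(g,h))$; for $n \in M_x$, $l\in P$, $[n,l] = n^l - n$. Setting: $S$ infinite pro-$p$-group of finite coclass; $T=\gamma_\ell(S)$ ($\ell$ large), $T\cong\mathbb{Z}_p^d$, $P=S/T$ finite, $|P|=p^m$ (here $m$ is only the exponent of $|P|$ in the definition of $e$), the series $T_0=T$, $T_{i+1}=[T_i,S]$ with all indices $p$; $T$ an additive $P$-module via conjugation; $S=\mathrm{Ext}(\rho)$, $\rho\in Z^2(P,T)$. $\mathcal{L}$ = elementary abelian $L\leq P$ with $\rho_L\in B^2(L,T)$; $\mathcal{L}_\eta=\{L\in\mathcal{L}\mid\mathrm{res}^P_L(\eta)=0\in H^3(L,T)\}$. Coclass family: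 $e=3\log_p|P|$, $M_x=T/p^{x+e}T$; $pro_x: Z^2(P,T)\to Z^2(P,M_x)$ induced by projection with image $I^2(P,M_x)$; $J^2(P,M_x)$ image of $Z^2(P,p^{x+e-\log_p|P|}T/p^{x+e}T)\to Z^2(P,M_x)$ induced by inclusion; fixed complements $K^2(P,M_x)\leq J^2(P,M_x)$ of $I^2(P,M_x)$ in $Z^2(P,M_x)$ with $mul(K^2(P,M_x))=K^2(P,M_{x+1})$ ($mul$ induced by $t+p^{x+e}T\mapsto pt+p^{x+e+1}T$). The composite $Z^2(P,M_x)\to H^2(P,M_x)\to H^3(P,p^{x+e}T)\to H^3(P,T)$ (quotient, connecting map, division by $p^{x+e}$) restricts to an isomorphism on $K^2(P,M_x)$; $\eta_x$ is the preimage of $\eta$, $\rho_x=pro_x(\rho)$, $G_x=\mathrm{Ext}(\rho_x+\eta_x)$, $M_x=\{(1,m)\}$. For $L\in\mathcal{L}_\eta$, a complement $C_{L,x}=\{(l,t_{L,x}(l))\}$ to $M_x$ in the full preimage of $L$ in $G_x$ is fixed, and $C_{L,x}(\gamma)=\{(l,t_{L,x}(l)+\gamma(l))\}$ for $\gamma\in Z^1(L,M_x)$. $\mathcal{O}_x(L)$ is the set of elementary abelian subgroups of $M_x$ centralised by $L$. $\mathcal{A}_p(G_x)$ is the Quillen category: objects elementary abelian $p$-subgroups, morphisms $E\to F$ the maps $e\mapsto e^g$ with $g\in G_x$, $E^g\leq F$. *)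

From HB Require Import structures.
From mathcomp Require Import all_boot all_fingroup all_solvable all_algebra.
Set Implicit Arguments. Unset Strict Implicit. Unset Printing Implicit Defensive.
Import GRing.Theory.
Local Open Scope ring_scope.

Definition is_right_action (P : finGroupType) (M : zmodType)
  (act : M -> P -> M) : Prop :=
  [/\ forall m, act m 1%g = m,
      forall m g h, act m (g * h)%g = act (act m g) h
    & forall g m n, act (m + n) g = act m g + act n g].

Definition is_Z2 (P : finGroupType) (M : zmodType) (act : M -> P -> M)
  (s : P -> P -> M) : Prop :=
  [/\ forall g, s 1%g g = 0, forall g, s g 1%g = 0
    & forall g h k, act (s g h) k + s (g * h)%g k = s h k + s g (h * k)%g].

Definition is_Z1 (P : finGroupType) (M : zmodType) (act : M -> P -> M)
  (L : {set P}) (c : P -> M) : Prop :=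
  forall l l', l \in L -> l' \in L -> c (l * l')%g = act (c l) l' + c l'.

Section Ext.
Variables (P : finGroupType) (M : finZmodType) (act : M -> P -> M)
  (s : P -> P -> M).

Definition ext_one : P * M := (1%g, 0).
Definition ext_mul (a b : P * M) : P * M :=
  ((a.1 * b.1)%g, act a.2 b.1 + b.2 + s a.1 b.1).
Definition ext_inv (a : P * M) : P * M :=
  ((a.1)^-1%g, - act a.2 (a.1)^-1%g - s a.1 (a.1)^-1%g).
Definition ext_conj (a g : P * M) : P * M := ext_mul (ext_inv g) (ext_mul a g).
Definition ext_expn (a : P * M) (n : nat) : P * M :=
  iter n (ext_mul a) ext_one.

Definition is_ext_subgroup (S : {set P * M}) : Prop :=
  [/\ ext_one \in S,
      forall a b, a \in S -> b \in S -> ext_mul a b \in S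
    & forall a, a \in S -> ext_inv a \in S].

(* objects of the Quillen category A_p(Ext(s)): elementary abelian p-subgroups *)
Definition is_ext_elab (p : nat) (S : {set P * M}) : Prop :=
  [/\ is_ext_subgroup S,
      forall a b, a \in S -> b \in S -> ext_mul a b = ext_mul b a
    & forall a, a \in S -> ext_expn a p = ext_one].

Definition induces_hom (A B : {set P * M}) (g : P * M) : Prop :=
  forall a, a \in A -> ext_conj a g \in B.

Definition same_hom (A : {set P * M}) (g g' : P * M) : Prop :=
  forall a, a \in A -> ext_conj a g = ext_conj a g'.
End Ext.

(* The set {(l, c l) | l in L}, e.g. C_{L,x} (c = t) or C_{L,x}(gamma) (c = t + gamma). *)
Definition graph_set (P : finGroupType) (M : finZmodType) (L : {set P})
  (c : P -> M) : {set P * M} := [set (l, c l) | l in L].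

Definition prod_set (P : finGroupType) (M : finZmodType) (act : M -> P -> M)
  (s : P -> P -> M) (C : {set P * M}) (O : {set M}) : {set P * M} :=
  [set ext_mul act s c (1%g, o) | c in C, o in O].

Definition is_elab_M (M : finZmodType) (p : nat) (O : {set M}) : Prop :=
  [/\ 0 \in O, forall a b, a \in O -> b \in O -> a + b \in O
    & forall a, a \in O -> a *+ p = 0].

Definition centM (P : finGroupType) (M : finZmodType) (act : M -> P -> M)
  (L : {set P}) : {set M} := [set n | [forall l in L, act n l - n == 0]].

Definition centM_conj (P : finGroupType) (M : finZmodType) (act : M -> P -> M)
  (L : {set P}) (w : P) : {set M} := [set act n w | n in centM act L].

(* With d := (m - m')^(w^-1) we have
   g = (1, d) g', and (1, d) lies in the normal subgroup M of Ext(s). Two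
   elements differing by a left factor e induce the same conjugation on A
   exactly when e centralises A; the element (1, d) commutes with a iff
   d^(a.1) = d, and the first projection maps A = C_{L,x}(gamma) x O onto L.
   Hence the two morphisms agree iff d is in C_M(L), i.e. m - m' is in
   C_M(L)^w. *)
From HB Require Import structures.
From mathcomp Require Import all_boot all_fingroup all_solvable all_algebra.
Import GRing.Theory.
Local Open Scope ring_scope.

Section RightAction.
Variables (P : finGroupType) (M : finZmodType) (act : M -> P -> M).
Hypothesis act_right : is_right_action act.

Lemma act1 m : act m 1%g = m.
Proof. by case: act_right. Qed.

Lemma actM m g h : act m (g * h)%g = act (act m g) h.
Proof. by case: act_right. Qed.

Lemma actD g m n : act (m + n) g = act m g + act n g.
Proof. by case: act_right. Qed.

Lemma act0 g : act 0 g = 0.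
Proof. by apply: (addrI (act 0 g)); rewrite -actD !addr0. Qed.

Lemma actN g m : act (- m) g = - act m g.
Proof. by apply: (addrI (act m g)); rewrite -actD !subrr act0. Qed.

Lemma actK g : cancel (act^~ g) (act^~ g^-1%g).
Proof. by move=> m; rewrite -actM mulgV act1. Qed.

Lemma actKV g : cancel (act^~ g^-1%g) (act^~ g).
Proof. by move=> m; rewrite -actM mulVg act1. Qed.

Section ExtensionGroup.
Variable s : P -> P -> M.
Hypothesis s_cocycle : is_Z2 act s.
Local Notation mul := (ext_mul act s).
Local Notation inv := (ext_inv act s).
Local Notation one := (ext_one P M).

Lemma s1g g : s 1%g g = 0. Proof. by case: s_cocycle. Qed.
Lemma sg1 g : s g 1%g = 0. Proof. by case: s_cocycle. Qed.

Lemma ext_mulA : associative mul.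
Proof.
case=> a1 a2 [b1 b2] [c1 c2]; rewrite /ext_mul /=; congr pair; first exact: mulgA.
case: s_cocycle => _ _ cocycle.
rewrite !actD -!actM -!addrA; congr (_ + (_ + _)).
by rewrite [RHS]addrCA cocycle.
Qed.

Lemma ext_mul1g : left_id one mul.
Proof. by case=> a1 a2; rewrite /ext_mul /= mul1g act0 add0r s1g addr0. Qed.

Lemma ext_mulg1 : right_id one mul.
Proof. by case=> a1 a2; rewrite /ext_mul /= mulg1 act1 addr0 sg1 addr0. Qed.

Lemma ext_mulV : right_inverse one inv mul.
Proof. by case=> a1 a2; rewrite /ext_mul /= mulgV addrA subrr add0r addNr. Qed.

Lemma ext_mulVg : left_inverse one inv mul.
Proof.
case=> a1 a2; rewrite /ext_mul /= mulVg; congr pair.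
case: s_cocycle => _ _ /(_ a1 a1^-1%g a1).
rewrite mulgV mulVg s1g sg1 addr0 => cocycle.
rewrite actD actN -actM mulVg act1 actN cocycle.
by rewrite addr0 [_ - _ + a2]addrAC addNr add0r addNr.
Qed.

Lemma ext_mulKg a : cancel (mul a) (mul (inv a)).
Proof. by move=> b; rewrite ext_mulA ext_mulVg ext_mul1g. Qed.

Lemma ext_mulKVg a : cancel (mul (inv a)) (mul a).
Proof. by move=> b; rewrite ext_mulA ext_mulV ext_mul1g. Qed.

Lemma ext_mulgK a : cancel (mul^~ a) (mul^~ (inv a)).
Proof. by move=> b; rewrite -ext_mulA ext_mulV ext_mulg1. Qed.

Lemma ext_conj_mull a g e :
  ext_conj act s a (mul e g) = ext_conj act s a g <-> mul e a = mul a e.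
Proof.
rewrite /ext_conj; split=> [Eeg | Eea].
  move/(congr1 (mul (mul e g))): Eeg.
  rewrite ext_mulKVg -ext_mulA ext_mulKVg !ext_mulA.
  by move/(congr1 (mul^~ (inv g))); rewrite !ext_mulgK.
rewrite -[RHS](ext_mulKg (mul e g)); congr mul.
by rewrite -ext_mulA ext_mulKVg [RHS]ext_mulA Eea -ext_mulA.
Qed.

Lemma ext_mul_kerl d a : mul (1%g, d) a = (a.1, act d a.1 + a.2).
Proof. by case: a => a1 a2; rewrite /ext_mul /= mul1g s1g addr0. Qed.

Lemma ext_mul_kerr d a : mul a (1%g, d) = (a.1, a.2 + d).
Proof. by case: a => a1 a2; rewrite /ext_mul /= mulg1 act1 sg1 addr0. Qed.

Lemma ext_commute_ker d a :
  mul (1%g, d) a = mul a (1%g, d) <-> act d a.1 = d.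
Proof.
rewrite ext_mul_kerl ext_mul_kerr addrC.
by split=> [[/addrI] | ->].
Qed.

Lemma prod_set_fst (L : {set P}) (c : P -> M) (O : {set M}) :
  0 \in O -> fst @: prod_set act s (graph_set L c) O = L.
Proof.
move=> O0; apply/setP=> l; apply/imsetP/idP => [[a Aa ->] | lL].
  by case/imset2P: Aa => _ o /imsetP[k kL ->] _ ->; rewrite ext_mul_kerr.
exists (mul (l, c l) (1%g, 0)); last by rewrite ext_mul_kerr.
by apply/imset2P; exists (l, c l) 0 => //; apply/imsetP; exists l.
Qed.

End ExtensionGroup.

Lemma mem_centM_conj (L : {set P}) (w : P) (n : M) :
  (n \in centM_conj act L w) =
  [forall l in L, act (act n (w^-1)%g) l == act n (w^-1)%g].
Proof.
apply/imsetP/forall_inP => [[k /[!inE] /forall_inP kC ->] l lL | nC].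
  by rewrite actK -subr_eq0 kC.
exists (act n (w^-1)%g); rewrite ?actKV // inE.
by apply/forall_inP => l lL; rewrite subr_eq0 nC.
Qed.

End RightAction.

Theorem lemma5p7 (p : nat) (P : finGroupType) (M : finZmodType)
  (act : M -> P -> M) (s : P -> P -> M)
  (L : {group P}) (t gam : P -> M) (O : {set M}) (B : {set P * M})
  (w : P) (m m' : M) :
  prime p -> (p.-group [set: P])%g -> p.-nat #|M| ->
  is_right_action act ->
  is_Z2 act s ->
  (p.-abelem L)%g ->
  is_ext_subgroup act s (graph_set L t) ->
  is_Z1 act L gam ->
  is_elab_M p O -> (forall o l, o \in O -> l \in L -> act o l = o) ->
  is_ext_elab act s p (prod_set act s (graph_set L (fun l => t l + gam l)) O) ->
  is_ext_elab act s p B ->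
  induces_hom act s (prod_set act s (graph_set L (fun l => t l + gam l)) O) B (w, m) ->
  induces_hom act s (prod_set act s (graph_set L (fun l => t l + gam l)) O) B (w, m') ->
  (same_hom act s (prod_set act s (graph_set L (fun l => t l + gam l)) O) (w, m) (w, m')
   <-> m - m' \in centM_conj act L w).
Proof.
move=> _ _ _ act_right s_cocycle _ _ _ [O0 _ _] _ _ _ _ _.
set A := prod_set _ _ _ _; set d := act (m - m') w^-1%g.
have g_translate : (w, m) = ext_mul act s (1%g, d) (w, m').
  by rewrite ext_mul_kerl //= actKV // subrK.
have fstA : fst @: A = L by exact: prod_set_fst.
rewrite mem_centM_conj // /same_hom g_translate.
split=> [same | /forall_inP dC a aA].
  apply/forall_inP=> l; rewrite -fstA => /imsetP[a aA ->].
  by apply/eqP/ext_commute_ker/ext_conj_mull; last exact: same.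
apply/ext_conj_mull/ext_commute_ker => //; apply/eqP.
by apply: dC; rewrite -fstA; apply: imset_f.
Qed.
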